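(* For every finite multiset $\Gamma$ and formulas $\varphi,\chi$: if $\varphi,\varphi,\Gamma\Rightarrow\chi$ is provable in $\mathsf{G4iSLt}$, then $\varphi,\Gamma\Rightarrow\chi$ is provable in $\mathsf{G4iSLt}$.
   Context: Formulas are built by the grammar $\varphi ::= p \mid \bot \mid \varphi\land\varphi \mid \varphi\lor\varphi \mid \varphi\to\varphi \mid \Box\varphi$, with $p$ ranging over a countably infinite set of propositional variables. For a multiset $\Gamma$, $\Box\Gamma=\{\Box\psi:\psi\in\Gamma\}$; a boxed formula is one of the form $\Box\psi$. A sequent is $\Gamma\Rightarrow\chi$ with $\Gamma$ a finite multiset of formulas and $\chi$ a formula. The sequent calculus $\mathsf{G4iSLt}$ has the following rules, where $p$ is a propositional variable and $\Phi$ always denotes a multiset containing no boxed formula: (⊥L) $\bot,\Gamma\Rightarrow\chi$ (no premise); (IdP) $\Gamma,p\Rightarrow p$ (no premise); (∧L) from $\Gamma,\varphi,\psi\Rightarrow\chi$ infer $\Gamma,\varphi\land\psi\Rightarrow\chi$; (∧R) from $\Gamma\Rightarrow\varphi$ and $\Gamma\Rightarrow\psi$ infer $\Gamma\Rightarrow\varphi\land\psi$; (∨L) from $\Gamma,\varphi\Rightarrow\chi$ and $\Gamma,\psi\Rightarrow\chi$ infer $\Gamma,\varphi\lor\psi\Rightarrow\chi$; (∨R$_i$), $i\in\{1,2\}$: from $\Gamma\Rightarrow\varphi_i$ infer $\Gamma\Rightarrow\varphi_1\lor\varphi_2$; (p→L) from $\Gamma,p,\varphi\Rightarrow\chi$ infer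 $\Gamma,p,p\to\varphi\Rightarrow\chi$; (→R) from $\Gamma,\varphi\Rightarrow\psi$ infer $\Gamma\Rightarrow\varphi\to\psi$; (□→L) from $\Phi,\Gamma,\psi,\Box\varphi\Rightarrow\varphi$ and $\Phi,\Box\Gamma,\psi\Rightarrow\chi$ infer $\Phi,\Box\Gamma,\Box\varphi\to\psi\Rightarrow\chi$; (SLtR) from $\Phi,\Gamma,\Box\varphi\Rightarrow\varphi$ infer $\Phi,\Box\Gamma\Rightarrow\Box\varphi$; (∧→L) from $\Gamma,\varphi\to(\psi\to\chi)\Rightarrow\delta$ infer $\Gamma,(\varphi\land\psi)\to\chi\Rightarrow\delta$; (∨→L) from $\Gamma,\varphi\to\chi,\psi\to\chi\Rightarrow\delta$ infer $\Gamma,(\varphi\lor\psi)\to\chi\Rightarrow\delta$; (→→L) from $\Gamma,\psi\to\chi\Rightarrow\varphi\to\psi$ and $\Gamma,\chi\Rightarrow\delta$ infer $\Gamma,(\varphi\to\psi)\to\chi\Rightarrow\delta$. A proof of a sequent $S$ is a finite tree of sequents with root $S$ in which each interior node together with its children forms an instance of a rule (conclusion, premises) and each leaf is the conclusion of a premise-free rule; $S$ is provable if it has a proof. *)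

From Stdlib Require Import List Permutation.
Import ListNotations.

Inductive form : Type :=
| Var : nat -> form
| Bot : form
| And : form -> form -> form
| Or  : form -> form -> form
| Imp : form -> form -> form
| Box : form -> form.

Definition boxed (f : form) : Prop :=
  match f with Box _ => True | _ => False end.

Definition noBox (Phi : list form) : Prop := Forall (fun f => ~ boxed f) Phi.

Definition boxes (G : list form) : list form := map Box G.

(* Provability in G4iSLt.  A finite multiset is represented by a list;
   each rule's conclusion is matched up to permutation (i.e. as a multiset). *)
Inductive G4iSLt : list form -> form -> Prop :=
| BotL G G0 c :
    Permutation G (Bot :: G0) -> G4iSLt G c
| IdP G G0 p :
    Permutation G (Var p :: G0) -> G4iSLt G (Var p)
| AndL G G0 a b c :
    Permutation G (And a b :: G0) -> G4iSLt (a :: b :: G0) c -> G4iSLt G c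
| AndR G a b :
    G4iSLt G a -> G4iSLt G b -> G4iSLt G (And a b)
| OrL G G0 a b c :
    Permutation G (Or a b :: G0) -> G4iSLt (a :: G0) c -> G4iSLt (b :: G0) c ->
    G4iSLt G c
| OrR1 G a b : G4iSLt G a -> G4iSLt G (Or a b)
| OrR2 G a b : G4iSLt G b -> G4iSLt G (Or a b)
| PImpL G G0 p a c :
    Permutation G (Var p :: Imp (Var p) a :: G0) ->
    G4iSLt (Var p :: a :: G0) c -> G4iSLt G c
| ImpR G a b : G4iSLt (a :: G) b -> G4iSLt G (Imp a b)
| BoxImpL G Phi Gam a b c :
    noBox Phi ->
    Permutation G (Phi ++ boxes Gam ++ [Imp (Box a) b]) ->
    G4iSLt (Phi ++ Gam ++ [b; Box a]) a ->
    G4iSLt (Phi ++ boxes Gam ++ [b]) c ->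
    G4iSLt G c
| SLtR G Phi Gam a :
    noBox Phi ->
    Permutation G (Phi ++ boxes Gam) ->
    G4iSLt (Phi ++ Gam ++ [Box a]) a ->
    G4iSLt G (Box a)
| AndImpL G G0 a b c d :
    Permutation G (Imp (And a b) c :: G0) ->
    G4iSLt (Imp a (Imp b c) :: G0) d -> G4iSLt G d
| OrImpL G G0 a b c d :
    Permutation G (Imp (Or a b) c :: G0) ->
    G4iSLt (Imp a c :: Imp b c :: G0) d -> G4iSLt G d
| ImpImpL G G0 a b c d :
    Permutation G (Imp (Imp a b) c :: G0) ->
    G4iSLt (Imp b c :: G0) (Imp a b) -> G4iSLt (c :: G0) d -> G4iSLt G d.

From Stdlib Require Import List Permutation Lia Arith.
Import ListNotations.

(* Contraction is proved simultaneously with three other admissible rules, by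
   induction on the weight of the formulas concerned and, inside, on the height of
   derivations: replacing [a -> b] by [b] in the antecedent, replacing
   [(a -> b) -> e] by [a] and [b -> e], and a cut on formulas [K] that follow from a
   provable [G] by left rules alone.  If neither copy of the contracted formula is
   principal in the last rule, the height induction applies to the premises.  If one
   is, the height-preserving invertibility of the left rules for conjunction,
   disjunction and the implications [(a /\ b) -> c], [(a \/ b) -> c], together with
   the replacement of [Box a] by [a], reduces to contracting lighter formulas.  The
   rule (->->L) is not invertible; its case uses the partial inversion above, whose
   own proof needs the restricted cut. *)

Definition unbox (f : form) : form := match f with Box a => a | _ => f end.

(* In the modal rules the premise context [Phi, Gam] is the image under [unbox]
   of the conclusion context [Phi, Box Gam], so contexts need not be split. *)
Inductive G4h : nat -> list form -> form -> Prop :=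
| hBot n G c : In Bot G -> G4h (S n) G c
| hId n G p : In (Var p) G -> G4h (S n) G (Var p)
| hAndL n G G0 a b c :
    Permutation G (And a b :: G0) -> G4h n (a :: b :: G0) c -> G4h (S n) G c
| hAndR n G a b : G4h n G a -> G4h n G b -> G4h (S n) G (And a b)
| hOrL n G G0 a b c :
    Permutation G (Or a b :: G0) -> G4h n (a :: G0) c -> G4h n (b :: G0) c ->
    G4h (S n) G c
| hOrR1 n G a b : G4h n G a -> G4h (S n) G (Or a b)
| hOrR2 n G a b : G4h n G b -> G4h (S n) G (Or a b)
| hPImpL n G G0 p a c :
    Permutation G (Var p :: Imp (Var p) a :: G0) -> G4h n (Var p :: a :: G0) c ->
    G4h (S n) G c
| hImpR n G a b : G4h n (a :: G) b -> G4h (S n) G (Imp a b)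
| hBoxImpL n G G0 a b c :
    Permutation G (Imp (Box a) b :: G0) ->
    G4h n (b :: Box a :: map unbox G0) a -> G4h n (b :: G0) c -> G4h (S n) G c
| hSLtR n G a : G4h n (Box a :: map unbox G) a -> G4h (S n) G (Box a)
| hAndImpL n G G0 a b c d :
    Permutation G (Imp (And a b) c :: G0) -> G4h n (Imp a (Imp b c) :: G0) d ->
    G4h (S n) G d
| hOrImpL n G G0 a b c d :
    Permutation G (Imp (Or a b) c :: G0) -> G4h n (Imp a c :: Imp b c :: G0) d ->
    G4h (S n) G d
| hImpImpL n G G0 a b c d :
    Permutation G (Imp (Imp a b) c :: G0) ->
    G4h n (Imp b c :: G0) (Imp a b) -> G4h n (c :: G0) d -> G4h (S n) G d.

Definition prv (G : list form) (c : form) : Prop := exists n, G4h n G c.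

(** * Multiset bookkeeping *)

Definition form_eq_dec (x y : form) : {x = y} + {x <> y}.
Proof. decide equality; apply Nat.eq_dec. Defined.

(* Occurrences are counted as sums of the opaque terms [occ1 y x], so that
   permutation goals become linear arithmetic. *)
Definition occ1 (y x : form) : nat := if form_eq_dec y x then 1 else 0.

Fixpoint occ (x : form) (l : list form) : nat :=
  match l with [] => 0 | y :: l' => occ1 y x + occ x l' end.

Lemma occ_app x l1 l2 : occ x (l1 ++ l2) = occ x l1 + occ x l2.
Proof. induction l1 as [|y l1 IH]; simpl; lia. Qed.

Lemma occ_count_occ x l : occ x l = count_occ form_eq_dec l x.
Proof.
  induction l as [|y l IH]; simpl; auto.
  unfold occ1; destruct (form_eq_dec y x); lia.
Qed.

Lemma Permutation_occ l1 l2 : Permutation l1 l2 <-> forall x, occ x l1 = occ x l2.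
Proof.
  rewrite (Permutation_count_occ form_eq_dec).
  split; intros H x; specialize (H x); rewrite ?occ_count_occ in *; auto.
Qed.

Ltac perm_solve :=
  apply Permutation_occ; let x := fresh "x" in intro x;
  repeat match goal with H : Permutation _ _ |- _ =>
    pose proof (proj1 (Permutation_occ _ _) H x); clear H end;
  rewrite ?map_app, ?occ_app in *; simpl in *; rewrite ?occ_app in *; lia.

Lemma Permutation_cons_In (x : form) l : In x l -> exists l', Permutation l (x :: l').
Proof.
  intros H; apply in_split in H as [l1 [l2 ->]].
  exists (l1 ++ l2); apply Permutation_sym, Permutation_middle.
Qed.

Lemma Permutation_app_cons_inv (Xs G G0 : list form) (P : form) :
  Permutation (Xs ++ G) (P :: G0) ->
  (exists Xs', Permutation Xs (P :: Xs') /\ Permutation G0 (Xs' ++ G)) \/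
  (exists l, Permutation G (P :: l) /\ Permutation G0 (Xs ++ l)).
Proof.
  intros H.
  assert (HP : In P (Xs ++ G)) by (apply (Permutation_in P (Permutation_sym H)); left; auto).
  apply in_app_or in HP as [HP|HP]; apply Permutation_cons_In in HP as [l Hl];
    [left|right]; exists l; split; auto;
    apply (@Permutation_cons_inv _ _ _ P), Permutation_sym; perm_solve.
Qed.

Lemma Permutation_cons_cons_neq (x y : form) G G0 :
  x <> y -> Permutation (x :: G) (y :: G0) ->
  exists l, Permutation G (y :: l) /\ Permutation G0 (x :: l).
Proof.
  intros Hxy H; destruct (Permutation_app_cons_inv [x] G G0 y H)
    as [[Xs' [HX _]] | [l [Hl HG0]]]; eauto.
  apply Permutation_length_1_inv in HX; injection HX as ->; contradiction.
Qed.

(** * Height-bounded derivations *)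

Lemma G4h_perm n G G' c : G4h n G c -> Permutation G G' -> G4h n G' c.
Proof.
  intros H; revert G'; induction H; intros G' HG';
    try (econstructor; solve [eauto | rewrite <- HG'; eassumption]).
  apply hSLtR, IHG4h, perm_skip, Permutation_map; auto.
Qed.

Ltac G4h_by_perm :=
  match goal with H : G4h _ _ _ |- G4h _ _ _ => eapply G4h_perm; [exact H | perm_solve] end.

Lemma G4h_mono n m G c : G4h n G c -> n <= m -> G4h m G c.
Proof.
  intros H; revert m; induction H; intros m Hm; destruct m as [|m]; try lia;
    [ eapply hBot | eapply hId | eapply hAndL | eapply hAndR | eapply hOrL
    | eapply hOrR1 | eapply hOrR2 | eapply hPImpL | eapply hImpR | eapply hBoxImpL
    | eapply hSLtR | eapply hAndImpL | eapply hOrImpL | eapply hImpImpL ];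
    eauto with arith.
Qed.

Lemma G4h_zero G c : ~ G4h 0 G c.
Proof. inversion 1. Qed.

Lemma prv_perm G G' c : prv G c -> Permutation G G' -> prv G' c.
Proof. intros [n H] HG; exists n; eapply G4h_perm; eauto. Qed.

Ltac prv_by_perm :=
  match goal with H : prv _ _ |- prv _ _ => eapply prv_perm; [exact H | perm_solve] end.

Lemma G4h_max n1 n2 G1 G2 c1 c2 :
  G4h n1 G1 c1 -> G4h n2 G2 c2 -> G4h (max n1 n2) G1 c1 /\ G4h (max n1 n2) G2 c2.
Proof. split; eapply G4h_mono; eauto; lia. Qed.

Lemma prv_Bot G c : In Bot G -> prv G c.
Proof. exists 1; apply hBot; auto. Qed.

Lemma prv_Id G p : In (Var p) G -> prv G (Var p).
Proof. exists 1; apply hId; auto. Qed.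

Lemma prv_AndL G G0 a b c :
  Permutation G (And a b :: G0) -> prv (a :: b :: G0) c -> prv G c.
Proof. intros HG [n H]; exists (S n); eapply hAndL; eauto. Qed.

Lemma prv_AndR G a b : prv G a -> prv G b -> prv G (And a b).
Proof.
  intros [n1 H1] [n2 H2]; destruct (G4h_max _ _ _ _ _ _ H1 H2).
  exists (S (max n1 n2)); apply hAndR; auto.
Qed.

Lemma prv_OrL G G0 a b c :
  Permutation G (Or a b :: G0) -> prv (a :: G0) c -> prv (b :: G0) c -> prv G c.
Proof.
  intros HG [n1 H1] [n2 H2]; destruct (G4h_max _ _ _ _ _ _ H1 H2).
  exists (S (max n1 n2)); eapply hOrL; eauto.
Qed.

Lemma prv_OrR1 G a b : prv G a -> prv G (Or a b).
Proof. intros [n H]; exists (S n); apply hOrR1; auto. Qed.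

Lemma prv_OrR2 G a b : prv G b -> prv G (Or a b).
Proof. intros [n H]; exists (S n); apply hOrR2; auto. Qed.

Lemma prv_PImpL G G0 p a c :
  Permutation G (Var p :: Imp (Var p) a :: G0) -> prv (Var p :: a :: G0) c -> prv G c.
Proof. intros HG [n H]; exists (S n); eapply hPImpL; eauto. Qed.

Lemma prv_ImpR G a b : prv (a :: G) b -> prv G (Imp a b).
Proof. intros [n H]; exists (S n); apply hImpR; auto. Qed.

Lemma prv_BoxImpL G G0 a b c :
  Permutation G (Imp (Box a) b :: G0) ->
  prv (b :: Box a :: map unbox G0) a -> prv (b :: G0) c -> prv G c.
Proof.
  intros HG [n1 H1] [n2 H2]; destruct (G4h_max _ _ _ _ _ _ H1 H2).
  exists (S (max n1 n2)); eapply hBoxImpL; eauto.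
Qed.

Lemma prv_SLtR G a : prv (Box a :: map unbox G) a -> prv G (Box a).
Proof. intros [n H]; exists (S n); apply hSLtR; auto. Qed.

Lemma prv_AndImpL G G0 a b c d :
  Permutation G (Imp (And a b) c :: G0) -> prv (Imp a (Imp b c) :: G0) d -> prv G d.
Proof. intros HG [n H]; exists (S n); eapply hAndImpL; eauto. Qed.

Lemma prv_OrImpL G G0 a b c d :
  Permutation G (Imp (Or a b) c :: G0) -> prv (Imp a c :: Imp b c :: G0) d -> prv G d.
Proof. intros HG [n H]; exists (S n); eapply hOrImpL; eauto. Qed.

Lemma prv_ImpImpL G G0 a b c d :
  Permutation G (Imp (Imp a b) c :: G0) ->
  prv (Imp b c :: G0) (Imp a b) -> prv (c :: G0) d -> prv G d.
Proof.
  intros HG [n1 H1] [n2 H2]; destruct (G4h_max _ _ _ _ _ _ H1 H2).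
  exists (S (max n1 n2)); eapply hImpImpL; eauto.
Qed.

(** * Equivalence with [G4iSLt] *)

Lemma map_unbox_boxes Gam : map unbox (boxes Gam) = Gam.
Proof. induction Gam; simpl; f_equal; auto. Qed.

Lemma map_unbox_noBox Phi : noBox Phi -> map unbox Phi = Phi.
Proof. induction 1 as [|[] ? Hx ? ?]; simpl; f_equal; auto; destruct Hx; exact I. Qed.

Lemma G4iSLt_prv G c : G4iSLt G c -> prv G c.
Proof.
  induction 1.
  - apply prv_Bot; eapply Permutation_in; [apply Permutation_sym; eauto | left; auto].
  - apply prv_Id; eapply Permutation_in; [apply Permutation_sym; eauto | left; auto].
  - eapply prv_AndL; eauto.
  - apply prv_AndR; auto.
  - eapply prv_OrL; eauto.
  - apply prv_OrR1; auto.
  - apply prv_OrR2; auto.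
  - eapply prv_PImpL; eauto.
  - apply prv_ImpR; auto.
  - apply prv_BoxImpL with (G0 := Phi ++ boxes Gam) (a := a) (b := b); [perm_solve | |].
    + eapply prv_perm; [eauto|].
      rewrite map_app, map_unbox_boxes, (map_unbox_noBox Phi H); perm_solve.
    + eapply prv_perm; [eauto | perm_solve].
  - apply prv_SLtR; eapply prv_perm; [eauto|].
    apply (Permutation_map unbox) in H0.
    rewrite map_app, map_unbox_boxes, (map_unbox_noBox Phi H) in H0; perm_solve.
  - eapply prv_AndImpL; eauto.
  - eapply prv_OrImpL; eauto.
  - eapply prv_ImpImpL; eauto.
Qed.

Fixpoint nonboxed (l : list form) : list form :=
  match l with [] => [] | Box _ :: l' => nonboxed l' | x :: l' => x :: nonboxed l' end.

Fixpoint box_contents (l : list form) : list form :=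
  match l with [] => [] | Box a :: l' => a :: box_contents l' | _ :: l' => box_contents l' end.

Lemma boxes_split l :
  noBox (nonboxed l) /\ Permutation l (nonboxed l ++ boxes (box_contents l)) /\
  Permutation (map unbox l) (nonboxed l ++ box_contents l).
Proof.
  induction l as [|x l [H1 [H2 H3]]]; simpl. { repeat split; constructor. }
  unfold boxes in *; destruct x; simpl; repeat split;
    try (constructor; [simpl; tauto | auto]); auto; perm_solve.
Qed.

Lemma G4h_G4iSLt n G c : G4h n G c -> forall G', Permutation G G' -> G4iSLt G' c.
Proof.
  induction 1; intros G' HG';
    try (econstructor; solve [eauto | rewrite <- HG'; eassumption]).
  - destruct (Permutation_cons_In Bot G') as [l Hl]; [rewrite <- HG'; auto|].
    eapply BotL; eauto.
  - destruct (Permutation_cons_In (Var p) G') as [l Hl]; [rewrite <- HG'; auto|].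
    eapply IdP; eauto.
  - destruct (boxes_split G0) as [S1 [S2 S3]].
    apply BoxImpL with (Phi := nonboxed G0) (Gam := box_contents G0) (a := a) (b := b);
      auto; [rewrite <- HG'; perm_solve | apply IHG4h1 | apply IHG4h2]; perm_solve.
  - destruct (boxes_split G') as [S1 [S2 S3]].
    apply SLtR with (Phi := nonboxed G') (Gam := box_contents G'); auto.
    apply IHG4h; apply (Permutation_map unbox) in HG'; perm_solve.
Qed.

Lemma prv_G4iSLt G c : prv G c -> G4iSLt G c.
Proof. intros [n H]; eapply G4h_G4iSLt; eauto. Qed.

Lemma G4h_weaken n G c x : G4h n G c -> G4h n (x :: G) c.
Proof.
  intros H; revert x; induction H; intros x.
  - apply hBot; right; auto.
  - apply hId; right; auto.
  - apply hAndL with (x :: G0) a b; [perm_solve|].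
    eapply G4h_perm; [apply (IHG4h x) | perm_solve].
  - apply hAndR; auto.
  - apply hOrL with (x :: G0) a b; [perm_solve | ..];
      eapply G4h_perm; [apply (IHG4h1 x) | perm_solve | apply (IHG4h2 x) | perm_solve].
  - apply hOrR1; auto.
  - apply hOrR2; auto.
  - apply hPImpL with (x :: G0) p a; [perm_solve|].
    eapply G4h_perm; [apply (IHG4h x) | perm_solve].
  - apply hImpR; eapply G4h_perm; [apply (IHG4h x) | perm_solve].
  - apply hBoxImpL with (x :: G0) a b; [perm_solve | ..];
      eapply G4h_perm; [apply (IHG4h1 (unbox x)) | simpl; perm_solve
                       | apply (IHG4h2 x) | perm_solve].
  - apply hSLtR; eapply G4h_perm; [apply (IHG4h (unbox x)) | simpl; perm_solve].
  - apply hAndImpL with (x :: G0) a b c; [perm_solve|].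
    eapply G4h_perm; [apply (IHG4h x) | perm_solve].
  - apply hOrImpL with (x :: G0) a b c; [perm_solve|].
    eapply G4h_perm; [apply (IHG4h x) | perm_solve].
  - apply hImpImpL with (x :: G0) a b c; [perm_solve | ..];
      eapply G4h_perm; [apply (IHG4h1 x) | perm_solve | apply (IHG4h2 x) | perm_solve].
Qed.

Lemma G4h_ImpR_inv n G a b : G4h n G (Imp a b) -> G4h n (a :: G) b.
Proof.
  intros H; remember (Imp a b) as c eqn:Hc; revert a b Hc.
  induction H; intros a0 b0 Hc; try discriminate.
  - apply hBot; right; auto.
  - apply hAndL with (a0 :: G0) a b; [perm_solve|].
    eapply G4h_perm; [apply (IHG4h _ _ Hc) | perm_solve].
  - apply hOrL with (a0 :: G0) a b; [perm_solve | ..];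
      eapply G4h_perm; [apply (IHG4h1 _ _ Hc) | perm_solve
                       | apply (IHG4h2 _ _ Hc) | perm_solve].
  - apply hPImpL with (a0 :: G0) p a; [perm_solve|].
    eapply G4h_perm; [apply (IHG4h _ _ Hc) | perm_solve].
  - injection Hc as -> ->; eapply G4h_mono; eauto.
  - apply hBoxImpL with (a0 :: G0) a b; [perm_solve | ..];
      eapply G4h_perm; [apply (G4h_weaken _ _ _ (unbox a0) H0) | simpl; perm_solve
                       | apply (IHG4h2 _ _ Hc) | perm_solve].
  - apply hAndImpL with (a0 :: G0) a b c; [perm_solve|].
    eapply G4h_perm; [apply (IHG4h _ _ Hc) | perm_solve].
  - apply hOrImpL with (a0 :: G0) a b c; [perm_solve|].
    eapply G4h_perm; [apply (IHG4h _ _ Hc) | perm_solve].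
  - apply hImpImpL with (a0 :: G0) a b c; [perm_solve | ..];
      eapply G4h_perm; [apply (G4h_weaken _ _ _ a0 H0) | perm_solve
                       | apply (IHG4h2 _ _ Hc) | perm_solve].
Qed.

Lemma prv_ImpR_inv G a b : prv G (Imp a b) -> prv (a :: G) b.
Proof. intros [n H]; exists n; apply G4h_ImpR_inv; auto. Qed.

(** * Height-preserving inversions *)

(* Families closed under the rules: [G4h] itself, for height-preserving
   transformations, and [prv] (ignoring the height), for plain admissibility. *)
Record rule_closed (T : nat -> list form -> form -> Prop) : Prop := {
  rc_perm n G G' c : T n G c -> Permutation G G' -> T n G' c;
  rc_Bot n G c : In Bot G -> T (S n) G c;
  rc_Id n G p : In (Var p) G -> T (S n) G (Var p);
  rc_AndL n G G0 a b c :
    Permutation G (And a b :: G0) -> T n (a :: b :: G0) c -> T (S n) G c;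
  rc_AndR n G a b : T n G a -> T n G b -> T (S n) G (And a b);
  rc_OrL n G G0 a b c :
    Permutation G (Or a b :: G0) -> T n (a :: G0) c -> T n (b :: G0) c -> T (S n) G c;
  rc_OrR1 n G a b : T n G a -> T (S n) G (Or a b);
  rc_OrR2 n G a b : T n G b -> T (S n) G (Or a b);
  rc_PImpL n G G0 p a c :
    Permutation G (Var p :: Imp (Var p) a :: G0) -> T n (Var p :: a :: G0) c -> T (S n) G c;
  rc_ImpR n G a b : T n (a :: G) b -> T (S n) G (Imp a b);
  rc_BoxImpL n G G0 a b c :
    Permutation G (Imp (Box a) b :: G0) ->
    T n (b :: Box a :: map unbox G0) a -> T n (b :: G0) c -> T (S n) G c;
  rc_SLtR n G a : T n (Box a :: map unbox G) a -> T (S n) G (Box a);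
  rc_AndImpL n G G0 a b c d :
    Permutation G (Imp (And a b) c :: G0) -> T n (Imp a (Imp b c) :: G0) d -> T (S n) G d;
  rc_OrImpL n G G0 a b c d :
    Permutation G (Imp (Or a b) c :: G0) -> T n (Imp a c :: Imp b c :: G0) d -> T (S n) G d;
  rc_ImpImpL n G G0 a b c d :
    Permutation G (Imp (Imp a b) c :: G0) ->
    T n (Imp b c :: G0) (Imp a b) -> T n (c :: G0) d -> T (S n) G d }.

Lemma G4h_rule_closed : rule_closed G4h.
Proof.
  constructor; intros;
    [ eapply G4h_perm | apply hBot | apply hId | eapply hAndL | apply hAndR
    | eapply hOrL | apply hOrR1 | apply hOrR2 | eapply hPImpL | apply hImpR
    | eapply hBoxImpL | apply hSLtR | eapply hAndImpL | eapply hOrImpL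
    | eapply hImpImpL ]; eauto.
Qed.

Lemma prv_rule_closed : rule_closed (fun _ => prv).
Proof.
  constructor; intros;
    [ eapply prv_perm | apply prv_Bot | apply prv_Id | eapply prv_AndL | apply prv_AndR
    | eapply prv_OrL | apply prv_OrR1 | apply prv_OrR2 | eapply prv_PImpL | apply prv_ImpR
    | eapply prv_BoxImpL | apply prv_SLtR | eapply prv_AndImpL | eapply prv_OrImpL
    | eapply prv_ImpImpL ]; eauto.
Qed.

(* [principal X n G c]: some derivation of [X, G => c] of height [S n] ends with
   a rule whose principal formula is [X]. *)
Inductive principal : form -> nat -> list form -> form -> Prop :=
| prBot n G c : principal Bot n G c
| prId n G p : principal (Var p) n G (Var p)
| prAndL n G a b c : G4h n (a :: b :: G) c -> principal (And a b) n G c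
| prOrL n G a b c : G4h n (a :: G) c -> G4h n (b :: G) c -> principal (Or a b) n G c
| prPImpL_atom n G G0 p a c :
    Permutation G (Imp (Var p) a :: G0) -> G4h n (Var p :: a :: G0) c ->
    principal (Var p) n G c
| prPImpL_imp n G G0 p a c :
    Permutation G (Var p :: G0) -> G4h n (Var p :: a :: G0) c ->
    principal (Imp (Var p) a) n G c
| prAndImpL n G a b c d :
    G4h n (Imp a (Imp b c) :: G) d -> principal (Imp (And a b) c) n G d
| prOrImpL n G a b c d :
    G4h n (Imp a c :: Imp b c :: G) d -> principal (Imp (Or a b) c) n G d
| prImpImpL n G a b c d :
    G4h n (Imp b c :: G) (Imp a b) -> G4h n (c :: G) d -> principal (Imp (Imp a b) c) n G d
| prBoxImpL n G a b c :
    G4h n (b :: Box a :: map unbox G) a -> G4h n (b :: G) c -> principal (Imp (Box a) b) n G c.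

Lemma principal_perm X n G G' c : principal X n G c -> Permutation G G' -> principal X n G' c.
Proof.
  intros H HG; destruct H.
  1-2: constructor.
  3: eapply prPImpL_atom; [rewrite <- HG|]; eassumption.
  3: eapply prPImpL_imp; [rewrite <- HG|]; eassumption.
  all: pose proof (Permutation_map unbox HG); constructor; G4h_by_perm.
Qed.

Section LastRule.

Variable T : nat -> list form -> form -> Prop.
Hypothesis HT : rule_closed T.
Variables (Xs Ys : list form) (n : nat).
Hypothesis IH : forall D c, G4h n (Xs ++ D) c -> T n (Ys ++ D) c.
Hypothesis IHu : forall D c, G4h n (map unbox Xs ++ D) c -> T n (map unbox Ys ++ D) c.

Lemma premise_transfer Qs G0 l c :
  Permutation G0 (Xs ++ l) -> G4h n (Qs ++ G0) c -> T n (Qs ++ Ys ++ l) c.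
Proof.
  intros Hl H; eapply rc_perm; [exact HT | apply (IH (Qs ++ l)) | perm_solve].
  G4h_by_perm.
Qed.

Lemma premise_transfer_unbox Qs G0 l c :
  Permutation G0 (Xs ++ l) -> G4h n (Qs ++ map unbox G0) c ->
  T n (Qs ++ map unbox (Ys ++ l)) c.
Proof.
  intros Hl H; apply (Permutation_map unbox) in Hl.
  eapply rc_perm; [exact HT | apply (IHu (Qs ++ map unbox l)) | perm_solve].
  G4h_by_perm.
Qed.

Lemma last_rule_cases G c :
  G4h (S n) (Xs ++ G) c ->
  (exists X Xs', Permutation Xs (X :: Xs') /\ principal X n (Xs' ++ G) c) \/
  T (S n) (Ys ++ G) c.
Proof.
  assert (Hsplit := Permutation_app_cons_inv Xs G).
  assert (Hin := fun x => @in_app_or _ Xs G x).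
  inversion 1; subst.
  - destruct (Hin _ H1) as [HX|HG].
    + apply Permutation_cons_In in HX as [Xs' HX]; left; exists Bot, Xs'; split; auto.
      constructor.
    + right; apply (rc_Bot _ HT); apply in_or_app; auto.
  - destruct (Hin _ H1) as [HX|HG].
    + apply Permutation_cons_In in HX as [Xs' HX]; left; exists (Var p), Xs'; split; auto.
      constructor.
    + right; apply (rc_Id _ HT); apply in_or_app; auto.
  - destruct (Hsplit _ _ H1) as [[Xs' [HX HG0]] | [l [Hl HG0]]].
    + left; exists (And a b), Xs'; split; auto; constructor; G4h_by_perm.
    + right; apply (rc_AndL _ HT) with (Ys ++ l) a b; [perm_solve|].
      eapply (premise_transfer [a; b]); eauto.
  - right; apply (rc_AndR _ HT); apply (IH G); auto.
  - destruct (Hsplit _ _ H1) as [[Xs' [HX HG0]] | [l [Hl HG0]]].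
    + left; exists (Or a b), Xs'; split; auto; constructor; G4h_by_perm.
    + right; apply (rc_OrL _ HT) with (Ys ++ l) a b; [perm_solve | ..];
        [eapply (premise_transfer [a]) | eapply (premise_transfer [b])]; eauto.
  - right; apply (rc_OrR1 _ HT); apply (IH G); auto.
  - right; apply (rc_OrR2 _ HT); apply (IH G); auto.
  - destruct (Hsplit _ _ H1) as [[Xs' [HX HG0]] | [l [Hl HG0]]].
    + left; exists (Var p), Xs'; split; auto.
      eapply prPImpL_atom; [apply Permutation_sym, HG0 | eauto].
    + apply Permutation_sym in HG0.
      destruct (Permutation_app_cons_inv _ _ _ _ HG0) as [[Xs' [HX HG1]] | [l2 [Hl2 HG1]]].
      * left; exists (Imp (Var p) a), Xs'; split; auto.
        eapply prPImpL_imp; [| eassumption]; perm_solve.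
      * right; apply (rc_PImpL _ HT) with (Ys ++ l2) p a; [perm_solve|].
        eapply (premise_transfer [Var p; a]); eauto.
  - right; apply (rc_ImpR _ HT); apply (premise_transfer [a] (Xs ++ G)); auto.
  - destruct (Hsplit _ _ H1) as [[Xs' [HX HG0]] | [l [Hl HG0]]].
    + left; exists (Imp (Box a) b), Xs'; split; auto.
      pose proof (Permutation_map unbox HG0); constructor; G4h_by_perm.
    + right; apply (rc_BoxImpL _ HT) with (Ys ++ l) a b; [perm_solve | ..].
      * eapply (premise_transfer_unbox [b; Box a]); eauto.
      * eapply (premise_transfer [b]); eauto.
  - right; apply (rc_SLtR _ HT); apply (premise_transfer_unbox [Box a] (Xs ++ G)); auto.
  - destruct (Hsplit _ _ H1) as [[Xs' [HX HG0]] | [l [Hl HG0]]].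
    + left; exists (Imp (And a b) c0), Xs'; split; auto; constructor; G4h_by_perm.
    + right; apply (rc_AndImpL _ HT) with (Ys ++ l) a b c0; [perm_solve|].
      eapply (premise_transfer [Imp a (Imp b c0)]); eauto.
  - destruct (Hsplit _ _ H1) as [[Xs' [HX HG0]] | [l [Hl HG0]]].
    + left; exists (Imp (Or a b) c0), Xs'; split; auto; constructor; G4h_by_perm.
    + right; apply (rc_OrImpL _ HT) with (Ys ++ l) a b c0; [perm_solve|].
      eapply (premise_transfer [Imp a c0; Imp b c0]); eauto.
  - destruct (Hsplit _ _ H1) as [[Xs' [HX HG0]] | [l [Hl HG0]]].
    + left; exists (Imp (Imp a b) c0), Xs'; split; auto; constructor; G4h_by_perm.
    + right; apply (rc_ImpImpL _ HT) with (Ys ++ l) a b c0; [perm_solve | ..];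
        [eapply (premise_transfer [Imp b c0]) | eapply (premise_transfer [c0])]; eauto.
Qed.

End LastRule.

Lemma last_rule_cases1 T (HT : rule_closed T) X Ys n
  (IH : forall D c, G4h n (X :: D) c -> T n (Ys ++ D) c)
  (IHu : forall D c, G4h n (unbox X :: D) c -> T n (map unbox Ys ++ D) c) G c :
  G4h (S n) (X :: G) c -> principal X n G c \/ T (S n) (Ys ++ G) c.
Proof.
  intros H; destruct (last_rule_cases T HT [X] Ys n IH IHu G c H)
    as [[X' [Xs' [HX Hpr]]] | HTc]; auto.
  apply Permutation_length_1_inv in HX; injection HX as -> ->; auto.
Qed.

Lemma G4h_Box_inv n a D c : G4h n (Box a :: D) c -> G4h n (a :: D) c.
Proof.
  revert a D c; induction n as [|n IHn]; intros a D c H; [now apply G4h_zero in H|].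
  apply (last_rule_cases1 G4h G4h_rule_closed (Box a) [a] n (IHn a)) in H as [Hpr|]; auto.
  - inversion Hpr.
  - intros D' c'; destruct a; simpl; auto.
Qed.

Lemma G4h_unbox n x D c : G4h n (x :: D) c -> G4h n (unbox x :: D) c.
Proof. destruct x; simpl; auto using G4h_Box_inv. Qed.

Lemma G4h_unbox2 n x y D c : G4h n (x :: y :: D) c -> G4h n (unbox x :: unbox y :: D) c.
Proof.
  intros H; apply G4h_unbox; eapply G4h_perm; [apply G4h_unbox | apply perm_swap].
  eapply G4h_perm; [exact H | apply perm_swap].
Qed.

Lemma G4h_AndL_inv n a b D c : G4h n (And a b :: D) c -> G4h n (a :: b :: D) c.
Proof.
  revert a b D c; induction n as [|n IHn]; intros a b D c H; [now apply G4h_zero in H|].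
  apply (last_rule_cases1 G4h G4h_rule_closed (And a b) [a; b] n (IHn a b)) in H as [Hpr|];
    [| auto | intros D' c' H'; apply G4h_unbox2, IHn, H'].
  inversion Hpr; subst; eapply G4h_mono; eauto.
Qed.

Lemma G4h_OrL_inv_l n a b D c : G4h n (Or a b :: D) c -> G4h n (a :: D) c.
Proof.
  revert a b D c; induction n as [|n IHn]; intros a b D c H; [now apply G4h_zero in H|].
  apply (last_rule_cases1 G4h G4h_rule_closed (Or a b) [a] n (IHn a b)) in H as [Hpr|];
    [| auto | intros D' c' H'; eapply G4h_unbox, IHn, H'].
  inversion Hpr; subst; eapply G4h_mono; eauto.
Qed.

Lemma G4h_OrL_inv_r n a b D c : G4h n (Or a b :: D) c -> G4h n (b :: D) c.
Proof.
  revert a b D c; induction n as [|n IHn]; intros a b D c H; [now apply G4h_zero in H|].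
  apply (last_rule_cases1 G4h G4h_rule_closed (Or a b) [b] n (IHn a b)) in H as [Hpr|];
    [| auto | intros D' c' H'; eapply G4h_unbox, IHn, H'].
  inversion Hpr; subst; eapply G4h_mono; eauto.
Qed.

Lemma G4h_AndImpL_inv n a b e D c :
  G4h n (Imp (And a b) e :: D) c -> G4h n (Imp a (Imp b e) :: D) c.
Proof.
  revert a b e D c; induction n as [|n IHn]; intros a b e D c H; [now apply G4h_zero in H|].
  apply (last_rule_cases1 G4h G4h_rule_closed _ [Imp a (Imp b e)] n (IHn a b e)) in H
    as [Hpr|]; [| auto | exact (IHn a b e)].
  inversion Hpr; subst; eapply G4h_mono; eauto.
Qed.

Lemma G4h_OrImpL_inv n a b e D c :
  G4h n (Imp (Or a b) e :: D) c -> G4h n (Imp a e :: Imp b e :: D) c.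
Proof.
  revert a b e D c; induction n as [|n IHn]; intros a b e D c H; [now apply G4h_zero in H|].
  apply (last_rule_cases1 G4h G4h_rule_closed _ [Imp a e; Imp b e] n (IHn a b e)) in H
    as [Hpr|]; [| auto | exact (IHn a b e)].
  inversion Hpr; subst; eapply G4h_mono; eauto.
Qed.

Definition not_and_or (a : form) : Prop :=
  match a with And _ _ | Or _ _ => False | _ => True end.

(* Every rule with principal formula [a -> b], for [a] not a conjunction or a
   disjunction, keeps [b] in the context of its last premise. *)
Lemma G4h_Imp_weaken n a b D c :
  not_and_or a -> G4h n (Imp a b :: D) c -> G4h n (b :: D) c.
Proof.
  intros Ha; revert D c; induction n as [|n IHn]; intros D c H; [now apply G4h_zero in H|].
  apply (last_rule_cases1 G4h G4h_rule_closed _ [b] n IHn) in H as [Hpr|];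
    [| auto | intros D' c' H'; apply G4h_unbox, IHn, H'].
  inversion Hpr; subst; try contradiction; eapply G4h_mono; try G4h_by_perm; eauto.
Qed.

Lemma prv_AndL_inv a b D c : prv (And a b :: D) c -> prv (a :: b :: D) c.
Proof. intros [n H]; exists n; apply G4h_AndL_inv; auto. Qed.

Lemma prv_OrL_inv_l a b D c : prv (Or a b :: D) c -> prv (a :: D) c.
Proof. intros [n H]; exists n; eapply G4h_OrL_inv_l; eauto. Qed.

Lemma prv_OrL_inv_r a b D c : prv (Or a b :: D) c -> prv (b :: D) c.
Proof. intros [n H]; exists n; eapply G4h_OrL_inv_r; eauto. Qed.

Lemma prv_AndImpL_inv a b e D c :
  prv (Imp (And a b) e :: D) c -> prv (Imp a (Imp b e) :: D) c.
Proof. intros [n H]; exists n; apply G4h_AndImpL_inv; auto. Qed.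

Lemma prv_OrImpL_inv a b e D c :
  prv (Imp (Or a b) e :: D) c -> prv (Imp a e :: Imp b e :: D) c.
Proof. intros [n H]; exists n; apply G4h_OrImpL_inv; auto. Qed.

Lemma prv_Imp_weaken a b D c : not_and_or a -> prv (Imp a b :: D) c -> prv (b :: D) c.
Proof. intros Ha [n H]; exists n; eapply G4h_Imp_weaken; eauto. Qed.

Lemma prv_weaken G c x : prv G c -> prv (x :: G) c.
Proof. intros [n H]; exists n; apply G4h_weaken; auto. Qed.

Lemma prv_unbox x D c : prv (x :: D) c -> prv (unbox x :: D) c.
Proof. intros [n H]; exists n; apply G4h_unbox; auto. Qed.

(** * Contraction *)

(* Conjunction weighs 2, so that (a /\ b) -> c is heavier than a -> (b -> c). *)
Fixpoint weight (f : form) : nat :=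
  match f with
  | Var _ | Bot => 1
  | And a b => weight a + weight b + 2
  | Or a b | Imp a b => weight a + weight b + 1
  | Box a => weight a + 1
  end.

Lemma weight_unbox f : weight (unbox f) <= weight f.
Proof. destruct f; simpl; lia. Qed.

Definition contractible (f : form) : Prop :=
  forall G c, prv (f :: f :: G) c -> prv (f :: G) c.

Definition imp_weakenable (a b : form) : Prop :=
  forall G c, prv (Imp a b :: G) c -> prv (b :: G) c.

Definition impimp_invertible (a b e : form) : Prop :=
  forall G c, prv (Imp (Imp a b) e :: G) c -> prv (a :: Imp b e :: G) c.

Lemma imp_weakenable_step a b :
  (forall f, weight f < weight (Imp a b) -> contractible f) ->
  (forall a' b', weight (Imp a' b') < weight (Imp a b) -> imp_weakenable a' b') ->
  imp_weakenable a b.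
Proof.
  intros HC Hw G c [n H]; revert G c H.
  induction n as [|n IHn]; intros G c H; [now apply G4h_zero in H|].
  apply (last_rule_cases1 (fun _ => prv) prv_rule_closed (Imp a b) [b] n IHn) in H
    as [Hpr|]; [| auto | intros D c' H'; apply prv_unbox, IHn, H'].
  inversion Hpr; subst.
  - exists n; G4h_by_perm.
  - apply (Hw b0 b); [simpl; lia|].
    apply (Hw a0 (Imp b0 b)); [simpl; lia|]; exists n; auto.
  - apply (HC b); [simpl; lia|].
    apply (Hw b0 b); [simpl; lia|]; eapply prv_perm; [|apply perm_swap].
    apply (Hw a0 b); [simpl; lia|]; exists n; auto.
  - exists n; auto.
  - exists n; auto.
Qed.

(* [avail Ctx K]: invertible left rules decompose [K] into formulas of [Ctx], so that
   [K] may be removed from the antecedent [K, Ctx] ([avail_cut]). *)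
Inductive avail (Ctx : list form) : form -> Prop :=
| av_in x : In x Ctx -> avail Ctx x
| av_and a b : avail Ctx a -> avail Ctx b -> avail Ctx (And a b)
| av_or1 a b : avail Ctx a -> avail Ctx (Or a b)
| av_or2 a b : avail Ctx b -> avail Ctx (Or a b)
| av_imp a b : avail Ctx b -> avail Ctx (Imp a b)
| av_andimp a b c : avail Ctx (Imp a (Imp b c)) -> avail Ctx (Imp (And a b) c)
| av_orimp a b c : avail Ctx (Imp a c) -> avail Ctx (Imp b c) -> avail Ctx (Imp (Or a b) c).

(* [reaches Ctx G K]: [K] follows from [G] in [Ctx] by left rules alone, typically
   because [G -> K] is available in [Ctx]. *)
Inductive reaches (Ctx : list form) : form -> form -> Prop :=
| re_avail G K : avail Ctx K -> reaches Ctx G K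
| re_imp G K : avail Ctx (Imp G K) -> reaches Ctx G K
| re_or g1 g2 K : reaches Ctx g1 K -> reaches Ctx g2 K -> reaches Ctx (Or g1 g2) K
| re_and g1 g2 K : reaches Ctx g1 (Imp g2 K) -> reaches Ctx (And g1 g2) K.

Lemma avail_mono Ctx Ctx2 x :
  (forall y, In y Ctx -> avail Ctx2 y) -> avail Ctx x -> avail Ctx2 x.
Proof. intros H Hx; induction Hx; try (econstructor; eauto; fail); auto. Qed.

Lemma reaches_mono Ctx Ctx2 G K :
  (forall y, In y Ctx -> avail Ctx2 y) -> reaches Ctx G K -> reaches Ctx2 G K.
Proof.
  intros H Hr; induction Hr;
    [apply re_avail | apply re_imp | apply re_or | apply re_and];
    eauto using avail_mono.
Qed.

Lemma avail_cons_mono Ctx P Qs G0 :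
  Permutation Ctx (P :: G0) -> avail (Qs ++ G0) P ->
  forall y, In y Ctx -> avail (Qs ++ G0) y.
Proof.
  intros HP HA y Hy; apply (Permutation_in y HP) in Hy as [<-|Hy]; auto.
  apply av_in, in_or_app; auto.
Qed.

Lemma reaches_cases Ctx G K :
  reaches Ctx G K ->
  avail Ctx K \/ In (Imp G K) Ctx \/
  (exists g1 g2, G = Or g1 g2 /\ reaches Ctx g1 K /\ reaches Ctx g2 K) \/
  (exists g1 g2, G = And g1 g2 /\ reaches Ctx g1 (Imp g2 K)).
Proof.
  intros Hr; induction Hr as [G K HA | G K HA | | ]; eauto 10.
  inversion HA; subst; auto; right; right;
    [right | left]; do 2 eexists; repeat split; eauto using re_imp.
Qed.

Lemma avail_cut W Ctx K F :
  (forall f, weight f <= W -> contractible f) ->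
  (forall a b, weight (Imp a b) <= W -> imp_weakenable a b) ->
  avail Ctx K -> weight K <= W -> prv (K :: Ctx) F -> prv Ctx F.
Proof.
  intros HC Hw HK; revert F; induction HK; intros F Hwt HF; simpl in Hwt.
  - apply Permutation_cons_In in H as [l Hl].
    eapply prv_perm; [apply (HC x) | apply Permutation_sym]; eauto.
    eapply prv_perm; [exact HF | perm_solve].
  - apply prv_AndL_inv in HF.
    apply IHHK2; [lia|]; apply prv_ImpR_inv, IHHK1; [lia|].
    apply prv_ImpR; eapply prv_perm; [exact HF | perm_solve].
  - apply prv_OrL_inv_l in HF; apply IHHK; [lia | auto].
  - apply prv_OrL_inv_r in HF; apply IHHK; [lia | auto].
  - apply (Hw a b) in HF; [apply IHHK; [lia | auto] | simpl; lia].
  - apply prv_AndImpL_inv in HF; apply IHHK; [simpl; lia | auto].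
  - apply prv_OrImpL_inv in HF.
    apply IHHK2; [simpl; lia|]; apply prv_ImpR_inv, IHHK1; [simpl; lia|].
    apply prv_ImpR; eapply prv_perm; [exact HF | perm_solve].
Qed.

(* The restricted cut that the (->->L) cases need: [K] is cut when it follows from
   a provable [G] via [reaches]. *)
Definition mp_admissible (W : nat) : Prop :=
  forall Ctx G K F, weight (Imp G K) <= W ->
    prv Ctx G -> reaches Ctx G K -> prv (K :: Ctx) F -> prv Ctx F.

Lemma impimp_invertible_step a b e :
  mp_admissible (weight (Imp b e)) -> impimp_invertible a b e.
Proof.
  intros Hmp G c [n H]; revert G c H.
  induction n as [|n IHn]; intros G c H; [now apply G4h_zero in H|].
  apply (last_rule_cases1 (fun _ => prv) prv_rule_closed _ [a; Imp b e] n IHn) in H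
    as [Hpr|]; [| auto | intros D c' H'; apply prv_unbox, IHn, H'].
  inversion Hpr; subst.
  apply (Hmp _ b e); auto.
  - exists n; apply G4h_ImpR_inv; G4h_by_perm.
  - apply re_imp, av_in; right; left; auto.
  - exists n; match goal with He : G4h n (e :: G) c |- _ =>
      apply (G4h_weaken _ _ _ (Imp b e)), (G4h_weaken _ _ _ a) in He end.
    G4h_by_perm.
Qed.

Section MpStep.

Variable W : nat.
Hypothesis contr_lt : forall f, weight f < W -> contractible f.
Hypothesis weaken_lt : forall a b, weight (Imp a b) < W -> imp_weakenable a b.
Hypothesis impimp_le :
  forall a b e, weight (Imp (Imp a b) e) <= W -> impimp_invertible a b e.
Variable n : nat.
Hypothesis IH : forall Ctx G K F, weight (Imp G K) <= W ->
  G4h n Ctx G -> reaches Ctx G K -> prv (K :: Ctx) F -> prv Ctx F.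

Lemma mp_avail Ctx K F : weight K < W -> avail Ctx K -> prv (K :: Ctx) F -> prv Ctx F.
Proof.
  intros HK HA HF; apply (avail_cut (weight K) Ctx K); auto.
  - intros f Hf; apply contr_lt; lia.
  - intros a b Hab; apply weaken_lt; simpl in *; lia.
Qed.

Lemma mp_contract_imp Ctx l P K F :
  weight K < W -> not_and_or P -> Permutation Ctx (Imp P K :: l) ->
  prv (K :: Ctx) F -> prv (K :: l) F.
Proof.
  intros HwK HP Hl HK; apply (contr_lt K HwK).
  apply (prv_Imp_weaken P K (K :: l)); auto; prv_by_perm.
Qed.

Lemma mp_premise Ctx Ctx2 G K F :
  weight (Imp G K) <= W -> reaches Ctx G K -> (forall y, In y Ctx -> avail Ctx2 y) ->
  G4h n Ctx2 G -> prv (K :: Ctx2) F -> prv Ctx2 F.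
Proof. intros; eapply IH; eauto using reaches_mono. Qed.

Lemma mp_AndL Ctx G0 a b G K F :
  weight (Imp G K) <= W -> reaches Ctx G K -> prv (K :: Ctx) F ->
  Permutation Ctx (And a b :: G0) -> G4h n (a :: b :: G0) G -> prv Ctx F.
Proof.
  intros HW Hr HK HP HD; apply prv_AndL with G0 a b; auto.
  apply (mp_premise Ctx _ G K); auto.
  - apply (avail_cons_mono _ _ [a; b] _ HP), av_and; apply av_in; simpl; auto.
  - eapply prv_perm; [apply (prv_AndL_inv a b (K :: G0)); prv_by_perm | perm_solve].
Qed.

Lemma mp_OrL Ctx G0 a b G K F :
  weight (Imp G K) <= W -> reaches Ctx G K -> prv (K :: Ctx) F ->
  Permutation Ctx (Or a b :: G0) -> G4h n (a :: G0) G -> G4h n (b :: G0) G -> prv Ctx F.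
Proof.
  intros HW Hr HK HP HDa HDb; apply prv_OrL with G0 a b; auto;
    apply (mp_premise Ctx _ G K); auto.
  - apply (avail_cons_mono _ _ [a] _ HP), av_or1, av_in; simpl; auto.
  - eapply prv_perm; [apply (prv_OrL_inv_l a b (K :: G0)); prv_by_perm | perm_solve].
  - apply (avail_cons_mono _ _ [b] _ HP), av_or2, av_in; simpl; auto.
  - eapply prv_perm; [apply (prv_OrL_inv_r a b (K :: G0)); prv_by_perm | perm_solve].
Qed.

Lemma mp_PImpL Ctx G0 p a G K F :
  weight (Imp G K) <= W -> reaches Ctx G K -> prv (K :: Ctx) F ->
  Permutation Ctx (Var p :: Imp (Var p) a :: G0) -> G4h n (Var p :: a :: G0) G ->
  prv Ctx F.
Proof.
  intros HW Hr HK HP HD; apply prv_PImpL with G0 p a; auto.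
  apply (mp_premise Ctx _ G K); auto.
  - intros y Hy; apply (Permutation_in y HP) in Hy as [<-|[<-|Hy]].
    + apply av_in; left; auto.
    + apply av_imp, av_in; right; left; auto.
    + apply av_in; right; right; auto.
  - eapply prv_perm; [apply (prv_Imp_weaken (Var p) a (K :: Var p :: G0)) | perm_solve].
    + exact I.
    + prv_by_perm.
Qed.

Lemma mp_BoxImpL Ctx G0 a b G K F :
  weight (Imp G K) <= W -> reaches Ctx G K -> prv (K :: Ctx) F ->
  Permutation Ctx (Imp (Box a) b :: G0) ->
  G4h n (b :: Box a :: map unbox G0) a -> G4h n (b :: G0) G -> prv Ctx F.
Proof.
  intros HW Hr HK HP HDa HD; apply prv_BoxImpL with G0 a b; [auto | exists n; auto |].
  apply (mp_premise Ctx _ G K); auto.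
  - apply (avail_cons_mono _ _ [b] _ HP), av_imp, av_in; simpl; auto.
  - eapply prv_perm; [apply (prv_Imp_weaken (Box a) b (K :: G0)) | perm_solve].
    + exact I.
    + prv_by_perm.
Qed.

Lemma mp_AndImpL Ctx G0 a b c G K F :
  weight (Imp G K) <= W -> reaches Ctx G K -> prv (K :: Ctx) F ->
  Permutation Ctx (Imp (And a b) c :: G0) -> G4h n (Imp a (Imp b c) :: G0) G ->
  prv Ctx F.
Proof.
  intros HW Hr HK HP HD; apply prv_AndImpL with G0 a b c; auto.
  apply (mp_premise Ctx _ G K); auto.
  - apply (avail_cons_mono _ _ [_] _ HP), av_andimp, av_in; simpl; auto.
  - eapply prv_perm; [apply (prv_AndImpL_inv a b c (K :: G0)); prv_by_perm | perm_solve].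
Qed.

Lemma mp_OrImpL Ctx G0 a b c G K F :
  weight (Imp G K) <= W -> reaches Ctx G K -> prv (K :: Ctx) F ->
  Permutation Ctx (Imp (Or a b) c :: G0) -> G4h n (Imp a c :: Imp b c :: G0) G ->
  prv Ctx F.
Proof.
  intros HW Hr HK HP HD; apply prv_OrImpL with G0 a b c; auto.
  apply (mp_premise Ctx _ G K); auto.
  - apply (avail_cons_mono _ _ [_; _] _ HP), av_orimp; apply av_in; simpl; auto.
  - eapply prv_perm; [apply (prv_OrImpL_inv a b c (K :: G0)); prv_by_perm | perm_solve].
Qed.

Lemma mp_ImpImpL Ctx G0 a b c G K F :
  weight (Imp G K) <= W -> reaches Ctx G K -> prv (K :: Ctx) F ->
  Permutation Ctx (Imp (Imp a b) c :: G0) ->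
  G4h n (Imp b c :: G0) (Imp a b) -> G4h n (c :: G0) G -> prv Ctx F.
Proof.
  intros HW Hr HK HP HDa HD; apply prv_ImpImpL with G0 a b c; [auto | exists n; auto |].
  apply (mp_premise Ctx _ G K); auto.
  - apply (avail_cons_mono _ _ [c] _ HP), av_imp, av_in; simpl; auto.
  - eapply prv_perm; [apply (prv_Imp_weaken (Imp a b) c (K :: G0)) | perm_solve].
    + exact I.
    + prv_by_perm.
Qed.

Lemma mp_Id Ctx p K F :
  weight (Imp (Var p) K) <= W -> reaches Ctx (Var p) K -> prv (K :: Ctx) F ->
  In (Var p) Ctx -> prv Ctx F.
Proof.
  intros HW Hr HK Hp; simpl in HW.
  destruct (reaches_cases _ _ _ Hr) as [HA | [HI | [[? [? [? _]]] | [? [? [? _]]]]]];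
    try discriminate; [apply (mp_avail Ctx K); auto; lia|].
  apply Permutation_cons_In in HI as [l Hl].
  assert (Hpl : In (Var p) l) by (destruct (Permutation_in _ Hl Hp); [discriminate | auto]).
  apply Permutation_cons_In in Hpl as [l2 Hl2].
  apply prv_PImpL with l2 p K; [perm_solve|].
  apply (mp_contract_imp Ctx (Var p :: l2) (Var p)) in HK; [prv_by_perm | lia | exact I |].
  perm_solve.
Qed.

Lemma mp_and_curried C a b K F :
  weight (Imp (And a b) K) <= W -> G4h n C a -> G4h n C b -> reaches C a (Imp b K) ->
  prv (K :: C) F -> prv C F.
Proof.
  intros HW Ha Hb Hr HK; simpl in HW.
  apply (IH C a (Imp b K)); auto; [simpl; lia|].
  apply (IH (Imp b K :: C) b K); auto.
  - simpl; lia.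
  - apply G4h_weaken; auto.
  - apply re_imp, av_in; left; auto.
  - eapply prv_perm; [apply (prv_weaken _ _ (Imp b K) HK) | perm_solve].
Qed.

Lemma mp_AndR Ctx a b K F :
  weight (Imp (And a b) K) <= W -> reaches Ctx (And a b) K -> prv (K :: Ctx) F ->
  G4h n Ctx a -> G4h n Ctx b -> prv Ctx F.
Proof.
  intros HW Hr HK Ha Hb.
  destruct (reaches_cases _ _ _ Hr) as [HA | [HI | [[? [? [? _]]] | [? [? [Heq Hr']]]]]];
    try discriminate; [apply (mp_avail Ctx K); auto; simpl in HW; lia | |].
  - apply Permutation_cons_In in HI as [l Hl].
    apply prv_AndImpL with l a b K; auto.
    apply (mp_and_curried _ a b K); auto.
    + apply G4h_AndImpL_inv; G4h_by_perm.
    + apply G4h_AndImpL_inv; G4h_by_perm.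
    + apply re_imp, av_in; left; auto.
    + eapply prv_perm; [apply (prv_AndImpL_inv a b K (K :: l)); prv_by_perm | perm_solve].
  - injection Heq as <- <-; apply (mp_and_curried _ a b K); auto.
Qed.

Lemma mp_OrR Ctx a b g K F :
  In g [a; b] -> weight (Imp (Or a b) K) <= W -> reaches Ctx (Or a b) K ->
  prv (K :: Ctx) F -> G4h n Ctx g -> prv Ctx F.
Proof.
  intros Hg HW Hr HK Hd; simpl in HW.
  assert (Hwg : weight (Imp g K) <= W) by (simpl; destruct Hg as [<-|[<-|[]]]; lia).
  destruct (reaches_cases _ _ _ Hr) as [HA | [HI | [[? [? [Heq [Hr1 Hr2]]]] | [? [? [? _]]]]]];
    try discriminate; [apply (mp_avail Ctx K); auto; lia | |].
  - apply Permutation_cons_In in HI as [l Hl].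
    apply prv_OrImpL with l a b K; auto.
    apply (IH _ g K); auto.
    + apply G4h_OrImpL_inv; G4h_by_perm.
    + apply re_imp, av_in; destruct Hg as [<-|[<-|[]]]; simpl; auto.
    + eapply prv_perm; [apply (prv_OrImpL_inv a b K (K :: l)); prv_by_perm | perm_solve].
  - injection Heq as <- <-; apply (IH _ g K); auto.
    destruct Hg as [<-|[<-|[]]]; auto.
Qed.

Lemma mp_ImpR Ctx a b K F :
  weight (Imp (Imp a b) K) <= W -> reaches Ctx (Imp a b) K -> prv (K :: Ctx) F ->
  G4h n (a :: Ctx) b -> prv Ctx F.
Proof.
  intros HW Hr HK Hd.
  destruct (reaches_cases _ _ _ Hr) as [HA | [HI | [[? [? [? _]]] | [? [? [? _]]]]]];
    try discriminate; [apply (mp_avail Ctx K); auto; simpl in HW; lia|].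
  apply Permutation_cons_In in HI as [l Hl].
  apply prv_ImpImpL with l a b K; auto.
  - apply prv_ImpR, (contr_lt a); [simpl in HW; lia|].
    eapply prv_perm; [apply (impimp_le a b K HW (a :: l) b) | perm_solve].
    exists n; G4h_by_perm.
  - apply (mp_contract_imp Ctx l (Imp a b)); [simpl in HW; lia | exact I | auto | auto].
Qed.

Lemma mp_SLtR Ctx a K F :
  weight (Imp (Box a) K) <= W -> reaches Ctx (Box a) K -> prv (K :: Ctx) F ->
  G4h n (Box a :: map unbox Ctx) a -> prv Ctx F.
Proof.
  intros HW Hr HK Hd; simpl in HW.
  destruct (reaches_cases _ _ _ Hr) as [HA | [HI | [[? [? [? _]]] | [? [? [? _]]]]]];
    try discriminate; [apply (mp_avail Ctx K); auto; lia|].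
  apply Permutation_cons_In in HI as [l Hl].
  apply prv_BoxImpL with l a K; auto.
  - exists n; apply (G4h_Imp_weaken _ (Box a)); [exact I|].
    apply (Permutation_map unbox) in Hl; G4h_by_perm.
  - apply (mp_contract_imp Ctx l (Box a)); [lia | exact I | auto | auto].
Qed.

End MpStep.

Lemma mp_admissible_step W :
  (forall f, weight f < W -> contractible f) ->
  (forall a b, weight (Imp a b) < W -> imp_weakenable a b) ->
  (forall a b e, weight (Imp (Imp a b) e) <= W -> impimp_invertible a b e) ->
  mp_admissible W.
Proof.
  intros HC Hw HLm Ctx G K F HW [n HD]; revert Ctx G K F HW HD.
  induction n as [|n IH]; intros Ctx G K F HW HD Hr HK; [now apply G4h_zero in HD|].
  inversion HD; subst.
  - apply prv_Bot; auto.
  - eapply mp_Id; eauto.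
  - eapply mp_AndL; eauto.
  - eapply mp_AndR; eauto.
  - eapply mp_OrL; eauto.
  - apply (mp_OrR W HC Hw n IH Ctx a b a K F); simpl; auto.
  - apply (mp_OrR W HC Hw n IH Ctx a b b K F); simpl; auto.
  - eapply mp_PImpL; eauto.
  - eapply mp_ImpR; eauto.
  - eapply mp_BoxImpL; eauto.
  - eapply mp_SLtR; eauto.
  - eapply mp_AndImpL; eauto.
  - eapply mp_OrImpL; eauto.
  - eapply mp_ImpImpL; eauto.
Qed.

Lemma contractible_prv f G G' c :
  contractible f -> prv (f :: f :: G) c -> Permutation (f :: G) G' -> prv G' c.
Proof. intros Hf H HG; eapply prv_perm; [apply Hf, H | exact HG]. Qed.

Section ContractionStep.

Variable w : nat.
Hypothesis contr_lt : forall f, weight f < w -> contractible f.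
Hypothesis impimp_le :
  forall a b e, weight (Imp (Imp a b) e) <= w -> impimp_invertible a b e.
Variable n : nat.
Hypothesis IH : forall f G c, weight f <= w -> G4h n (f :: f :: G) c -> prv (f :: G) c.

Lemma contract_lt f G c : weight f < w -> G4h n (f :: f :: G) c -> prv (f :: G) c.
Proof. intros Hf H; apply (contr_lt f Hf); exists n; auto. Qed.

Lemma contract_ImpImpL a b e G d :
  weight (Imp (Imp a b) e) <= w ->
  G4h n (Imp b e :: Imp (Imp a b) e :: G) (Imp a b) ->
  G4h n (e :: Imp (Imp a b) e :: G) d -> prv (Imp (Imp a b) e :: G) d.
Proof.
  intros Hw H1 H2; simpl in Hw; apply prv_ImpImpL with G a b e; auto.
  - assert (H1' : prv (a :: Imp b e :: Imp b e :: G) (Imp a b)).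
    { apply (impimp_le a b e); [simpl; lia|]; exists n; G4h_by_perm. }
    apply prv_ImpR_inv, (contr_lt a) in H1'; [|lia].
    assert (Hbe : weight (Imp b e) < w) by (simpl; lia).
    apply prv_ImpR; eapply prv_perm; [apply (contr_lt (Imp b e) Hbe (a :: G)) | perm_solve].
    prv_by_perm.
  - apply contract_lt; [lia|].
    apply (G4h_Imp_weaken _ (Imp a b)); [exact I | G4h_by_perm].
Qed.

Lemma contract_principal f G c :
  weight f <= w -> principal f n (f :: G) c -> prv (f :: G) c.
Proof.
  intros Hw Hpr; inversion Hpr; subst; simpl in Hw.
  - apply prv_Bot; left; auto.
  - apply prv_Id; left; auto.
  - apply prv_AndL with G a b; [auto|].
    apply (contractible_prv b (a :: G)); [apply contr_lt; lia | | perm_solve].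
    apply (contractible_prv a (b :: b :: G)); [apply contr_lt; lia | | perm_solve].
    exists n; eapply G4h_perm; [apply (G4h_AndL_inv _ a b (a :: b :: G)) | perm_solve].
    G4h_by_perm.
  - apply prv_OrL with G a b; [auto | ..];
      [apply (contractible_prv a G) | apply (contractible_prv b G)];
      try (apply contr_lt; lia); auto; exists n;
      [apply (G4h_OrL_inv_l _ a b) | apply (G4h_OrL_inv_r _ a b)]; G4h_by_perm.
  - match goal with HP : Permutation _ _ |- _ =>
      apply Permutation_cons_cons_neq in HP as [l [Hl HG0]]; [|discriminate] end.
    apply prv_PImpL with l p a; [perm_solve|].
    apply (IH (Var p) (a :: l)); [auto | G4h_by_perm].
  - match goal with HP : Permutation _ _ |- _ =>
      apply Permutation_cons_cons_neq in HP as [l [Hl HG0]]; [|discriminate] end.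
    apply prv_PImpL with l p a; [perm_solve|].
    apply (contractible_prv a (Var p :: l)); [apply contr_lt; lia | | perm_solve].
    exists n; apply (G4h_Imp_weaken _ (Var p)); [exact I | G4h_by_perm].
  - apply prv_AndImpL with G a b c0; [auto|].
    apply (contractible_prv (Imp a (Imp b c0)) G); [apply contr_lt; simpl; lia | | auto].
    exists n; apply G4h_AndImpL_inv; G4h_by_perm.
  - apply prv_OrImpL with G a b c0; [auto|].
    apply (contractible_prv (Imp b c0) (Imp a c0 :: G));
      [apply contr_lt; simpl; lia | | perm_solve].
    apply (contractible_prv (Imp a c0) (Imp b c0 :: Imp b c0 :: G));
      [apply contr_lt; simpl; lia | | perm_solve].
    exists n; eapply G4h_perm;
      [apply (G4h_OrImpL_inv _ a b c0 (Imp a c0 :: Imp b c0 :: G)) | perm_solve].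
    G4h_by_perm.
  - apply contract_ImpImpL; auto.
  - apply prv_BoxImpL with G a b; [auto | ..];
      [apply (contractible_prv b (Box a :: map unbox G)) | apply (contractible_prv b G)];
      try (apply contr_lt; lia); auto; exists n;
      apply (G4h_Imp_weaken _ (Box a)); try exact I; simpl in *; G4h_by_perm.
Qed.

End ContractionStep.

Lemma contractible_step w :
  (forall f, weight f < w -> contractible f) ->
  (forall a b e, weight (Imp (Imp a b) e) <= w -> impimp_invertible a b e) ->
  forall f, weight f <= w -> contractible f.
Proof.
  intros HC HLm.
  enough (Hn : forall n f G c, weight f <= w -> G4h n (f :: f :: G) c -> prv (f :: G) c)
    by (intros f Hf G c [n H]; eauto).
  induction n as [|n IH]; intros f G c Hf H; [now apply G4h_zero in H|].
  destruct (last_rule_cases (fun _ => prv) prv_rule_closed [f; f] [f] n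
              (fun D c' => IH f D c' Hf)
              (fun D c' => IH (unbox f) D c' (Nat.le_trans _ _ _ (weight_unbox f) Hf)) G c H)
    as [[X [Xs' [HX Hpr]]] | Hdone]; auto.
  assert (HXf : X = f) by (destruct (Permutation_in X (Permutation_sym HX) (or_introl eq_refl))
                             as [|[|[]]]; auto).
  subst X; apply Permutation_cons_inv in HX.
  apply (contract_principal w HC HLm n IH); auto.
  eapply principal_perm; [exact Hpr | perm_solve].
Qed.

Definition admissible_below (w : nat) : Prop :=
  (forall f, weight f < w -> contractible f) /\
  (forall a b, weight (Imp a b) < w -> imp_weakenable a b) /\
  (forall a b e, weight (Imp (Imp a b) e) < w -> impimp_invertible a b e) /\
  (forall W, W < w -> mp_admissible W).

(* Going from [w] to [S w]: partial inversion up to weight [w] (which needs the cut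
   below [w]), then the cut at [w], contraction up to [w], and finally replacing
   [a -> b] by [b] up to [w]. *)
Lemma admissible_below_all w : admissible_below w.
Proof.
  induction w as [|w [HC [Hw [HL HM]]]]; [repeat split; intros; lia|].
  assert (HL' : forall a b e, weight (Imp (Imp a b) e) <= w -> impimp_invertible a b e)
    by (intros a b e H; apply impimp_invertible_step, HM; simpl in *; lia).
  split; [|split; [|split]].
  - intros f Hf; apply (contractible_step w); auto; lia.
  - intros a b Hab; apply imp_weakenable_step.
    + intros f Hf; apply (contractible_step w); auto; lia.
    + intros a' b' H'; apply Hw; lia.
  - intros a b e H; apply HL'; lia.
  - intros W HW; destruct (Nat.eq_dec W w) as [->|]; [|apply HM; lia].
    apply mp_admissible_step; auto.
Qed.

Lemma prv_contract f G c : prv (f :: f :: G) c -> prv (f :: G) c.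
Proof.
  destruct (admissible_below_all (S (weight f))) as [HC _].
  apply HC; lia.
Qed.

Theorem mainTheorem13 :
  forall (Gam : list form) (phi chi : form),
    G4iSLt (phi :: phi :: Gam) chi -> G4iSLt (phi :: Gam) chi.
Proof.
  intros Gam phi chi H.
  apply prv_G4iSLt, prv_contract, G4iSLt_prv, H.
Qed.
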